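(* Let $K=K(p,q)$ be a 2-bridge knot with $e_i,\sigma,C,D,W,W_*$ as in the context, let $n\in\mathbb{Z}$ and $N=n-2\sigma$. If $t\in\mathbb{C}\setminus\{0\}$ and $u=(t-t^{-1})^2$, then the equations $C^NW_*W=\mathrm{Id}$ and $WC=DW$ do not both hold.
   Context: $K(p,q)$ denotes the 2-bridge knot with $p,q$ odd integers, $q\in(-p,p)$. For $1\le i\le p-1$ let $e_i=(-1)^{\lfloor iq/p\rfloor}$ and $\sigma=\sum_{i=1}^{p-1}e_i$. For $t\in\mathbb{C}\setminus\{0\}$, $u\in\mathbb{C}$ let $C=\begin{pmatrix}t&1\\0&t^{-1}\end{pmatrix}$, $D=\begin{pmatrix}t&0\\-u&t^{-1}\end{pmatrix}$, $W=C^{e_1}D^{e_2}\cdots C^{e_{p-2}}D^{e_{p-1}}$ and $W_*=D^{e_1}C^{e_2}\cdots D^{e_{p-2}}C^{e_{p-1}}$. *)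

From HB Require Import structures.
From mathcomp Require Import all_boot all_order all_algebra.
From mathcomp Require Import complex.
From mathcomp Require Import Rstruct.
Set Implicit Arguments. Unset Strict Implicit. Unset Printing Implicit Defensive.
Import Order.TTheory GRing.Theory Num.Theory.
Local Open Scope ring_scope.

Definition CC : Type := complex Rdefinitions.R.

(* e_i = (-1)^{floor(i q / p)}; for p > 0 the intdiv quotient (m %/ p)%Z
   is the floor of m / p. *)
Definition eps (p q : int) (i : nat) : int := (-1) ^ (divz (i%:Z * q) p).

Definition sigma (p q : int) : int := \sum_(1 <= i < `|p|%N) eps p q i.

Definition Cmx (t : CC) : 'M[CC]_2 :=
  \matrix_(i < 2, j < 2)
    (if (i == 0) && (j == 0) then t
     else if (i == 0) && (j == 1) then 1
     else if (i == 1) && (j == 1) then t^-1 else 0).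

Definition Dmx (t u : CC) : 'M[CC]_2 :=
  \matrix_(i < 2, j < 2)
    (if (i == 0) && (j == 0) then t
     else if (i == 1) && (j == 0) then - u
     else if (i == 1) && (j == 1) then t^-1 else 0).

Definition Wmx (p q : int) (t u : CC) : 'M[CC]_2 :=
  \prod_(1 <= i < `|p|%N) (if odd i then Cmx t else Dmx t u) ^ eps p q i.

Definition Wstar (p q : int) (t u : CC) : 'M[CC]_2 :=
  \prod_(1 <= i < `|p|%N) (if odd i then Dmx t u else Cmx t) ^ eps p q i.

(** When [u = (t - t^-1)^2], the matrices [C] and [D] share the eigenvector
    [v = (1, t^-1 - t)^T], with eigenvalues [t^-1] and [t].  Hence [v] is an
    eigenvector of [W], with a nonzero eigenvalue [l] since [C] and [D] are
    invertible.  On the other hand, the [(0,1)] entry of [W C = D W] reads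
    [W00 + t^-1 W01 = t W01], i.e. [(W v)_0 = 0], so [l = 0]. *)

From HB Require Import structures.
From mathcomp Require Import all_boot all_order all_algebra.
From mathcomp Require Import complex.
From mathcomp Require Import Rstruct.
From mathcomp Require Import ring.

Set Implicit Arguments.
Unset Strict Implicit.
Unset Printing Implicit Defensive.
Import Order.TTheory GRing.Theory Num.Theory.
Local Open Scope ring_scope.

Section Eigenvectors.

Variables (R : fieldType) (n : nat) (v : 'cV[R]_n.+1).

Lemma eigenvector_exprz (A : 'M[R]_n.+1) (a : R) (z : int) :
  A \in unitmx -> a != 0 -> A *m v = a *: v -> A ^ z *m v = a ^ z *: v.
Proof.
move=> Aunit a_neq0 Av.
have Anv (k : nat) : A ^+ k *m v = a ^+ k *: v.
  elim: k => [|k IHk]; first by rewrite !expr0 mul1mx scale1r.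
  rewrite exprS -mulmxE -mulmxA IHk.
  by rewrite -scalemxAr Av scalerA -exprSr.
case: z => k; first exact: Anv.
rewrite NegzE -!invr_expz.
apply: (@scalerI _ _ (a ^+ k.+1)); first by rewrite expf_neq0.
have Aku : A ^+ k.+1 \is a GRing.unit by rewrite unitrX.
rewrite scalerA mulfV ?expf_neq0 // scale1r scalemxAr -Anv mulmxA.
by rewrite mulmxE mulVr ?mul1mx.
Qed.

Lemma eigenvector_prod (I : Type) (r : seq I) (P : pred I)
    (F : I -> 'M[R]_n.+1) (a : I -> R) :
  (forall i, P i -> F i *m v = a i *: v) ->
  (\prod_(i <- r | P i) F i) *m v = (\prod_(i <- r | P i) a i) *: v.
Proof.
move=> Fv; apply: (big_ind2 (fun M x => M *m v = x *: v)) => //.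
- by rewrite mul1mx scale1r.
- move=> M1 x1 M2 x2 M1v M2v.
  by rewrite -mulmxE -mulmxA M2v -scalemxAr M1v scalerA mulrC.
Qed.

End Eigenvectors.

Definition CD_eigenvector (t : CC) : 'cV[CC]_2 :=
  \col_i (if i == 0 then 1 else t^-1 - t).

Ltac entrywise := apply/matrixP; case=> [[|[|?]] ?]; case=> [[|[|?]] ?] //;
  rewrite !mxE /= ?big_ord_recl ?big_ord0 /= ?mxE /=.

Ltac lower_triangular :=
  apply/is_trig_mxP => -[[|[|?]] ?] -[[|[|?]] ?] //; rewrite !mxE.

Section CDmatrices.

Variable t : CC.
Hypothesis t_neq0 : t != 0.
Let u := (t - t^-1) ^+ 2.
Let v := CD_eigenvector t.

Lemma Cmx_eigenvector : Cmx t *m v = t^-1 *: v.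
Proof. by entrywise; field. Qed.

Lemma Dmx_eigenvector : Dmx t u *m v = t *: v.
Proof. by entrywise; rewrite /u; field. Qed.

Lemma Cmx_unit : Cmx t \in unitmx.
Proof.
rewrite unitmxE -det_tr det_trig; last by lower_triangular.
by rewrite !big_ord_recl big_ord0 !mxE /= mulr1 mulfV ?unitr1.
Qed.

Lemma Dmx_unit : Dmx t u \in unitmx.
Proof.
rewrite unitmxE det_trig; last by lower_triangular.
by rewrite !big_ord_recl big_ord0 !mxE /= mulr1 mulfV ?unitr1.
Qed.

Lemma Wmx_eigenvector (p q : int) :
  exists2 l, l != 0 & Wmx p q t u *m v = l *: v.
Proof.
pose ev i := (if odd i then t^-1 else t) ^ eps p q i.
exists (\prod_(1 <= i < `|p|%N) ev i).
  rewrite prodf_seq_neq0; apply/allP => i _.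
  by rewrite expfz_neq0 //; case: odd; rewrite ?invr_neq0.
apply: eigenvector_prod => i _; rewrite /ev; case: (odd i).
- by apply: eigenvector_exprz; rewrite ?invr_neq0 ?Cmx_unit ?Cmx_eigenvector.
- by apply: eigenvector_exprz; rewrite ?Dmx_unit ?Dmx_eigenvector.
Qed.

Lemma intertwiner_CD_eigenvector (W : 'M[CC]_2) :
  W * Cmx t = Dmx t u * W -> (W *m v) 0 0 = 0.
Proof.
move=> /(congr1 (fun M : 'M_2 => M 0 1)).
rewrite !mxE !big_ord_recl !big_ord0 !mxE /=.
have [-> ->] : lift ord0 ord0 = 1 :> 'I_2 /\ ord0 = 0 :> 'I_2.
  by split; apply: val_inj.
rewrite !addr0 mulr1 mul0r addr0 => CD01.
by rewrite mulrBr addrA CD01 mulrC subrr.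
Qed.

End CDmatrices.

Theorem mainTheorem6 (p q : int) (n : int) (t : CC) :
  odd `|p|%N -> odd `|q|%N -> - p < q < p ->
  t != 0 ->
  let u := (t - t^-1) ^+ 2 in
  let N := n - 2 * sigma p q in
  ~ (Cmx t ^ N * Wstar p q t u * Wmx p q t u = 1
     /\ Wmx p q t u * Cmx t = Dmx t u * Wmx p q t u).
Proof.
move=> _ _ _ t_neq0 u N [_ WC_DW].
have [l l_neq0 Wv] := Wmx_eigenvector t_neq0 p q.
have := intertwiner_CD_eigenvector WC_DW.
by rewrite Wv !mxE /= mulr1 => /eqP; rewrite (negPf l_neq0).
Qed.
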